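(* Let $\Delta\ge 4$ be an integer, put $t=\left\lfloor\frac{\Delta+3}{2}\right\rfloor$, and for positive integers $i,j$ define \[ F(i,j)=(4\Delta-6)\Bigl(\frac{1}{i}+\frac{1}{j}\Bigr)+\Delta^2-6\Delta+3+\frac{6}{\Delta}-(i-j)^2 . \] Then for all integers $1\le p\le q\le t$ we have $F(p,q)\ge F(3,\Delta)$. *)

From mathcomp Require Import all_boot all_order all_algebra.
Set Implicit Arguments. Unset Strict Implicit. Unset Printing Implicit Defensive.
Import Order.TTheory GRing.Theory Num.Theory.
Local Open Scope ring_scope.

Definition F (D i j : nat) : rat :=
  (4 * D%:R - 6) * ((i%:R)^-1 + (j%:R)^-1) + (D%:R) ^+ 2 - 6 * D%:R + 3
  + 6 / D%:R - (i%:R - j%:R) ^+ 2.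

Definition tD (D : nat) : nat := (D + 3) %/ 2.

(* With s = (D+3)/2 >= q, write
     F(p,q) - F(3,D) = (4D-6)(1/p + 1/q - 1/3 - 1/D) + (D-3)^2 - (q-p)^2.
   For p >= 3 both 1/p and 1/q are at least 1/s, q - p is at most s - 3 = (D-3)/2,
   and 1/3 + 1/D - 2/s = (D-3)^2 / (3D(D+3)); so the difference is at least
   (D-3)^2 (1 - 1/4 - 1/4).  For p <= 2 we only use 1/q >= 1/s >= 1/D and
   q - p <= s - p, which leaves (D-3)(9D-19)/12 for p = 1 and (D-3)(9D-31)/12
   for p = 2. *)
From mathcomp Require Import all_boot all_order all_algebra.
From mathcomp Require Import zify ring lra.
Set Implicit Arguments. Unset Strict Implicit. Unset Printing Implicit Defensive.
Import Order.TTheory GRing.Theory Num.Theory.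
Local Open Scope ring_scope.

Definition Fr {R : realFieldType} (d i j : R) : R :=
  (4 * d - 6) * (i^-1 + j^-1) + d ^+ 2 - 6 * d + 3 + 6 / d - (i - j) ^+ 2.

Lemma F_natE (D i j : nat) : F D i j = Fr D%:R i%:R j%:R.
Proof. by []. Qed.

Section RealField.

Variable R : realFieldType.
Implicit Types d p q a : R.

Lemma Fr_sub_Fr3E d p q : Fr d p q - Fr d 3 d =
  (4 * d - 6) * (p^-1 + q^-1 - 3^-1 - d^-1) + (d - 3) ^+ 2 - (q - p) ^+ 2.
Proof. rewrite /Fr; ring. Qed.

Lemma sqr_subr_le_half d p q a : a <= p -> p <= q -> 2 * q <= d + 3 ->
  (q - p) ^+ 2 <= ((d + 3) / 2 - a) ^+ 2.
Proof.
move=> hap hpq hqd.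
have : 0 <= ((d + 3) / 2 - a - (q - p)) * ((d + 3) / 2 - a + (q - p)).
  by apply: mulr_ge0; lra.
nra.
Qed.

Lemma lef_pV_half d q : 0 < q -> 2 * q <= d + 3 -> ((d + 3) / 2)^-1 <= q^-1.
Proof. by move=> hq hqd; rewrite lef_pV2 ?posrE //; lra. Qed.

Lemma Fr3_le_Fr_ge3 d p q : 3 <= p -> p <= q -> 2 * q <= d + 3 ->
  Fr d 3 d <= Fr d p q.
Proof.
move=> hp hpq hqd; rewrite -subr_ge0 Fr_sub_Fr3E; set s := (d + 3) / 2.
have hd : 3 <= d by lra.
have hpinv : s^-1 <= p^-1 by apply: lef_pV_half; lra.
have hqinv : s^-1 <= q^-1 by apply: lef_pV_half; lra.
have hdiff : (q - p) ^+ 2 <= (d - 3) ^+ 2 / 4.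
  by apply: le_trans (sqr_subr_le_half hp hpq hqd) _; rewrite /s; lra.
have hcentre : (4 * d - 6) * (3^-1 + d^-1 - 2 * s^-1)
               = (4 * d - 6) * (d - 3) ^+ 2 / (3 * d * (d + 3)).
  by rewrite /s; field; rewrite !(gt_eqF, mulf_neq0) //; lra.
have hcentre_le : (4 * d - 6) * (3^-1 + d^-1 - 2 * s^-1) <= (d - 3) ^+ 2 / 4.
  rewrite hcentre ler_pdivrMr; last by rewrite !mulr_gt0 //; lra.
  have : 0 <= (d - 3) ^+ 2 * (3 * d * (d + 3) - 4 * (4 * d - 6)).
    by rewrite mulr_ge0 ?sqr_ge0 //; nra.
  lra.
have : 0 <= (4 * d - 6) * (p^-1 + q^-1 - 2 * s^-1) by apply: mulr_ge0; lra.
have := sqr_ge0 (d - 3); lra.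
Qed.

Lemma Fr_sub_Fr3_ge d p q : 3 <= d -> 0 < p -> p <= q -> 2 * q <= d + 3 ->
  (4 * d - 6) * (p^-1 - 3^-1) + (d - 3) ^+ 2 - ((d + 3) / 2 - p) ^+ 2
  <= Fr d p q - Fr d 3 d.
Proof.
move=> hd hp hpq hqd.
have hqinv : d^-1 <= q^-1.
  apply: le_trans (lef_pV_half _ hqd); last by apply: lt_le_trans hpq.
  by rewrite lef_pV2 ?posrE; lra.
have : 0 <= (4 * d - 6) * (q^-1 - d^-1) by apply: mulr_ge0; lra.
have := sqr_subr_le_half (lexx p) hpq hqd; rewrite Fr_sub_Fr3E; lra.
Qed.

Lemma Fr3_le_Fr d p q :
  4 <= d -> [\/ p = 1, p = 2 | 3 <= p] -> p <= q -> 2 * q <= d + 3 ->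
  Fr d 3 d <= Fr d p q.
Proof.
move=> hd hp hpq hqd.
case: hp hpq => [-> | -> | hp] hpq; last exact: Fr3_le_Fr_ge3.
- rewrite -subr_ge0; apply: le_trans (Fr_sub_Fr3_ge _ _ hpq hqd); [| lra | lra].
  have : 0 <= (d - 3) * (9 * d - 19) by apply: mulr_ge0; lra.
  lra.
- rewrite -subr_ge0; apply: le_trans (Fr_sub_Fr3_ge _ _ hpq hqd); [| lra | lra].
  have : 0 <= (d - 3) * (9 * d - 31) by apply: mulr_ge0; lra.
  lra.
Qed.

End RealField.

Theorem lemma4p5 (D : nat) (hD : (4 <= D)%N) (p q : nat)
  (hp : (1 <= p)%N) (hpq : (p <= q)%N) (hqt : (q <= tD D)%N) :
  F D 3 D <= F D p q.
Proof.
rewrite !F_natE; apply: Fr3_le_Fr.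
- by rewrite (ler_nat _ 4).
- case: p hp {hpq} => [|[|[|p]]] // _; [by constructor 1 | by constructor 2 |].
  by constructor 3; rewrite (ler_nat _ 3).
- by rewrite ler_nat.
- by rewrite -natrM -natrD ler_nat; move: hqt; rewrite /tD; lia.
Qed.
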